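(* Let $G_{\tan\cup\sec}$ be the $q$-grammar with master variables $\{x,y\}$, rule $x_j\mapsto q^j(1+x_jx_{j+1})$, $y_j\mapsto q^jx_jy_{j+1}$ ($j\ge0$), and order DIO, with $q$-derivative $D$, and let $\Omega(D^n(x_0))$ be the number of terms of $D^n(x_0)$. Then for $n\ge3$, \[ \Omega(D^n(x_0))=\begin{cases}2k^3+5k^2+2,& n=2k+1,\\ (k+2)(2k^2-2k+1),& n=2k.\end{cases} \]
   Context: $\mathbb{K}$ is a commutative ring with unity and characteristic zero, $q$ an indeterminate. For a set $S$ of master variables, $\mathbb{S}=\{s_i:s\in S,\ i\ge0\}$ is a set of non-commuting variables, $F(\mathbb{S})$ the free group on $\mathbb{S}$, $\mathbb{E}=\mathbb{K}[q][F(\mathbb{S})]$ its group algebra. A rule $R$ assigns to each $s_i$ an element of $\mathbb{E}$. The up-arrow $\uparrow$ is the linear map replacing each letter $s_i^{\pm1}$ of a word by $s_{i+1}^{\pm1}$. DIO is the order that stably reorders the letters of a word according to the position of their underlying variable in the sequence $\dots,x_2,y_2,x_1,y_1,x_0,y_0$ (extended linearly). The $q$-derivative of a $q$-grammar $(S,R,\rho)$ is the $\mathbb{K}[q]$-linear map with $D(w_1\cdots w_n)=\sum_{j=1}^n\rho\big(w_1\cdots w_{j-1}R(w_j)\uparrow(w_{j+1}\cdots w_n)\big)$ for letters $w_j$, $D^0=\mathrm{id}$, $D^k=D\circ D^{k-1}$. Writing an element of $\mathbb{E}$ as $\sum_{w\in F(\mathbb{S})}a_ww$, its terms are the words $w$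 (including possibly the empty word) with $a_w\ne0$. *)

From mathcomp Require Import all_boot all_order all_algebra.
Set Implicit Arguments. Unset Strict Implicit. Unset Printing Implicit Defensive.
Import GRing.Theory.
Local Open Scope ring_scope.

(* A letter s_i with master variable s in {x,y}: (false,i) = x_i, (true,i) = y_i.
   Only positive letters occur in D^n(x_0) for this grammar. *)
Definition letter := (bool * nat)%type.
Definition word := seq letter.

Definition up (w : word) : word := [seq (l.1, l.2.+1) | l <- w].

(* DIO: ..., x_2, y_2, x_1, y_1, x_0, y_0 *)
Definition dio_le (a b : letter) : bool :=
  (b.2 < a.2)%N || ((a.2 == b.2) && (a.1 ==> b.1)).
Definition rho (w : word) : word := sort dio_le w.

Section Grammar.
Variable K : comNzRingType.

(* formal K[q]-linear combinations of words; q is the polynomial variable 'X *)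
Definition expr := seq (word * {poly K}).

Definition Rts (l : letter) : expr :=
  let j := l.2 in
  if ~~ l.1 then [:: ([::], 'X^j); ([:: (false, j); (false, j.+1)], 'X^j)]
  else [:: ([:: (false, j); (true, j.+1)], 'X^j)].

Fixpoint Draw (w : word) : expr :=
  match w with
  | [::] => [::]
  | a :: w' => [seq (t.1 ++ up w', t.2) | t <- Rts a]
               ++ [seq (a :: t.1, t.2) | t <- Draw w']
  end.

Definition Dword (w : word) : expr := [seq (rho t.1, t.2) | t <- Draw w].

Definition Dexpr (e : expr) : expr :=
  flatten [seq [seq (u.1, t.2 * u.2) | u <- Dword t.1] | t <- e].

Definition Dpow (n : nat) (e : expr) : expr := iter n Dexpr e.

Definition x0 : expr := [:: ([:: (false, 0%N)], 1)].

Definition coefw (e : expr) (w : word) : {poly K} := \sum_(t <- e | t.1 == w) t.2.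

Definition terms (e : expr) : seq word :=
  [seq w <- undup [seq t.1 | t <- e] | coefw e w != 0].

Definition Omega (e : expr) : nat := size (terms e).
End Grammar.

From mathcomp Require Import all_boot all_order all_algebra.
From mathcomp Require Import zify.
Import GRing.Theory.

Set Implicit Arguments. Unset Strict Implicit. Unset Printing Implicit Defensive.

(* At q = 1 every coefficient of D^n(x_0) is the number of ways its word arises,
   so in characteristic zero the terms of D^n(x_0) are just its distinct words.
   Only letters x_j occur, and after DIO-sorting every word is empty or a block
   x_{a+1}^c x_a^d with c > 0.  D replaces one letter of a block and raises the
   letters after it, which again yields blocks; by induction on n the blocks at
   step n are x_n x_{n-1}^n, x_1^n x_0, the powers x_1^c with 0 < c < n and
   c + n odd, and, for 1 <= a <= n - 2, the blocks whose length c + d is either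
   less than n with c + d + n odd, or equal to n + 1 with d > 0; the empty word
   occurs exactly for odd n. *)

Definition Rts_words (l : letter) : seq word :=
  if ~~ l.1 then [:: [::]; [:: (false, l.2); (false, l.2.+1)]]
  else [:: [:: (false, l.2); (true, l.2.+1)]].

Fixpoint Draw_words (w : word) : seq word :=
  match w with
  | [::] => [::]
  | a :: w' => [seq r ++ up w' | r <- Rts_words a] ++ [seq a :: u | u <- Draw_words w']
  end.

Definition Dword_words (w : word) : seq word := map rho (Draw_words w).

Definition Dwords (ws : seq word) : seq word := flatten (map Dword_words ws).

Section Expressions.
Variable K : comNzRingType.
Local Open Scope ring_scope.

Lemma map_fst_Draw w : map fst (Draw K w) = Draw_words w.
Proof.
elim: w => [|l w IHw] //=; rewrite map_cat -!map_comp -IHw.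
congr (_ ++ _); first by case: l => [[] j].
by rewrite -map_comp.
Qed.

Lemma map_fst_Dpow n (e : expr K) : map fst (Dpow n e) = iter n Dwords (map fst e).
Proof.
elim: n => [|n IHn] //=; rewrite -IHn /Dexpr /Dwords map_flatten -!map_comp.
congr flatten; apply: eq_map => t /=.
by rewrite -map_comp /Dword_words -map_fst_Draw -!map_comp.
Qed.

Definition coefs_one_at1 (e : expr K) : bool := all (fun t => t.2.[1] == 1) e.

Lemma Draw_coefs_one_at1 w : coefs_one_at1 (Draw K w).
Proof.
elim: w => [|l w IHw] //=; rewrite /coefs_one_at1 all_cat !all_map.
apply/andP; split; last exact: sub_all IHw.
by case: l => [[] j] /=; rewrite hornerXn expr1n eqxx.
Qed.

Lemma Dpow_coefs_one_at1 n (e : expr K) : coefs_one_at1 e -> coefs_one_at1 (Dpow n e).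
Proof.
move=> e1; elim: n => [|n IHn] //=.
apply/allP => u /flatten_mapP [t /(allP IHn) /eqP t1] /mapP [v /mapP [v' v'D ->] ->] /=.
by rewrite hornerM t1 mul1r; apply: (allP (Draw_coefs_one_at1 t.1)).
Qed.

Lemma horner1_coefw (e : expr K) w :
  coefs_one_at1 e -> (coefw e w).[1] = (count (fun t => t.1 == w) e)%:R.
Proof.
rewrite /coefw; elim: e => [|t e IHe] /=; first by rewrite big_nil horner0.
case/andP => /eqP t1 e1; rewrite big_cons.
by case: (t.1 == w); rewrite ?hornerD ?t1 IHe // ?natrD ?add0n.
Qed.

Lemma Omega_coefs_one_at1 (e : expr K) :
  (forall m : nat, m.+1%:R != 0 :> K) ->
  coefs_one_at1 e -> Omega e = size (undup (map fst e)).
Proof.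
move=> charK0 e1; rewrite /Omega /terms; congr size; apply/all_filterP/allP => w.
rewrite mem_undup => /mapP [t te ->]; apply: contraTneq isT => coef0.
have := horner1_coefw t.1 e1; rewrite coef0 horner0.
have : (0 < count (fun u => u.1 == t.1) e)%N by rewrite -has_count; apply/hasP; exists t.
by case: count => // m _ /esym/eqP; rewrite (negPf (charK0 m)).
Qed.

End Expressions.

Lemma dio_le_total : total dio_le.
Proof. by move=> [x i] [y j]; rewrite /dio_le /=; case: ltngtP => //= _; case: x y => [] []. Qed.

Lemma dio_le_trans : transitive dio_le.
Proof. by move=> [y j] [x i] [z k]; rewrite /dio_le /=; case: x y z => [] [] [] /=; lia. Qed.

Lemma dio_le_anti : antisymmetric dio_le.
Proof.
move=> [x i] [y j]; rewrite /dio_le /= => le_xy.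
have eij : i = j by case: x y le_xy => [] [] /=; lia.
by subst j; case: x y le_xy => [] [] //=; rewrite ltnn eqxx.
Qed.

Definition xblock (a c d : nat) : word := nseq c (false, a.+1) ++ nseq d (false, a).

Lemma xblock0 a d : xblock a.+1 0 d = xblock a d 0.
Proof. by rewrite /xblock cats0. Qed.

Lemma sorted_xblock a c d : sorted dio_le (xblock a c d).
Proof.
rewrite (sorted_pairwise dio_le_trans) pairwise_cat.
have pairwise_nseq l k : dio_le l l -> pairwise dio_le (nseq k l).
  by move=> le_ll; elim: k => //= k ->; rewrite andbT all_nseq le_ll orbT.
rewrite !pairwise_nseq ?andbT /dio_le ?ltnn ?eqxx //.
by apply/allrelP => _ _ /nseqP [-> _] /nseqP [-> _]; rewrite /= ltnSn.
Qed.

Lemma rho_xblock s a c d : perm_eq s (xblock a c d) -> rho s = xblock a c d.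
Proof.
rewrite /rho => /(perm_sortP dio_le_total dio_le_trans dio_le_anti) ->.
exact/sorted_sort/sorted_xblock/dio_le_trans.
Qed.

Lemma xblock_inj a c d a' c' d' : 0 < c -> 0 < c' -> xblock a c d = xblock a' c' d' ->
  [/\ a = a', c = c' & d = d'].
Proof.
case: c c' => [|c] [|c'] // _ _ eq_blk.
have ea : a = a' by case: eq_blk.
subst a'; have := congr1 (count_mem (false, a.+1)) eq_blk.
have := congr1 size eq_blk.
rewrite /xblock !size_cat !count_cat !size_nseq !count_nseq /= eqxx.
have -> : ((false, a) == (false, a.+1)) = false by apply/eqP => -[]; lia.
by rewrite /= mul1n mul0n !addn0 => *; split; lia.
Qed.

Lemma Draw_words_cat s1 s2 : Draw_words (s1 ++ s2) =
  [seq u ++ up s2 | u <- Draw_words s1] ++ [seq s1 ++ u | u <- Draw_words s2].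
Proof.
elim: s1 => [|l s1 IHs1] /=; first by rewrite map_id.
rewrite IHs1 /up map_cat -!map_comp catA !map_cat -!map_comp.
by congr ((_ ++ _) ++ _); apply: eq_map => u /=; rewrite catA.
Qed.

Lemma Draw_words_nseq c l : Draw_words (nseq c l) =
  flatten [seq [seq nseq i l ++ r ++ up (nseq (c - i.+1) l) | r <- Rts_words l] | i <- iota 0 c].
Proof.
elim: c => [|c IHc] //=; rewrite IHc subn1 /=; congr (_ ++ _).
rewrite map_flatten -(addn0 1) iotaDl -!map_comp; congr flatten.
by apply: eq_map => i /=; rewrite -map_comp.
Qed.

Ltac perm_by_count :=
  apply/permP => p; rewrite /up !map_nseq /= !(count_cat, count_nseq) /= ?count_nseq;
  repeat match goal with |- context [?p (false, ?j)] => is_var p; case: (p (false, j)) end; lia.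

Lemma Dword_xblock a c d : Dword_words (xblock a c d) =
  flatten [seq [:: xblock a.+1 (c - i.+1) (i + d); xblock a.+1 (c - i) (i + d).+1] | i <- iota 0 c]
  ++ flatten [seq [:: xblock a (c + d - j.+1) j; xblock a (c + d - j) j.+1] | j <- iota 0 d].
Proof.
rewrite /Dword_words {1}/xblock Draw_words_cat !Draw_words_nseq map_cat !map_flatten.
rewrite -!map_comp; congr (flatten _ ++ flatten _); apply/eq_in_map => i;
  rewrite mem_iota => /andP [_ lt_i] /=; congr [:: _; _]; apply: rho_xblock; rewrite /xblock;
  perm_by_count.
Qed.

Lemma mem_Dword_xblock a c d w : w \in Dword_words (xblock a c d) <->
  (exists2 i, i < c & w = xblock a.+1 (c - i.+1) (i + d) \/ w = xblock a.+1 (c - i) (i + d).+1) \/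
  (exists2 j, j < d & w = xblock a (c + d - j.+1) j \/ w = xblock a (c + d - j) j.+1).
Proof.
rewrite Dword_xblock mem_cat; split.
- by case/orP=> /flatten_mapP [i]; rewrite mem_iota !inE => lt_i /orP [] /eqP ->;
    [left | left | right | right]; exists i; auto.
- by case=> -[i lt_i w_i]; apply/orP; [left | right]; apply/flatten_mapP; exists i;
    rewrite ?mem_iota ?inE //; case: w_i => ->; rewrite eqxx ?orbT.
Qed.

(* Requiring c > 0 makes the triple of a block unique, since xblock a.+1 0 d = xblock a d 0. *)
Definition shape (n a c d : nat) : bool :=
  (0 < c) && [|| [&& a.+1 == n, c == 1 & d == n],
                 [&& a == 0, d == 0, c < n & odd (c + n)],
                 [&& a == 0, c == n & d == 1]
               | [&& 0 < a, a.+2 <= n, odd (c + d + n)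
                   & (c + d <= n) || (c + d == n.+1) && (0 < d)]].

Definition reachable (n : nat) (w : word) : Prop :=
  (w = [::] /\ odd n) \/ exists a c d, shape n a c d /\ w = xblock a c d.

Lemma reachable_xblock n a c d : shape n a c d -> reachable n (xblock a c d).
Proof. by move=> sh; right; exists a, c, d. Qed.

Ltac solve_shape := rewrite /shape; lia.

Ltac case_shape sh :=
  case/andP: sh => ? /or4P [/and3P [? ? ?] | /and4P [? ? ? ?] | /and3P [? ? ?] | /and4P [? ? ? ?]].

Lemma reachable_Dword n a c d w :
  shape n a c d -> w \in Dword_words (xblock a c d) -> reachable n.+1 w.
Proof.
move=> sh /mem_Dword_xblock [] [i lt_i [] ->].
  2-4: by apply: reachable_xblock; case_shape sh; solve_shape.
have [c_i | c_i] := posnP (c - i.+1); last by apply: reachable_xblock; case_shape sh; solve_shape.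
rewrite c_i xblock0; have [d_i | d_i] := posnP (i + d).
  by rewrite d_i; left; split=> //; case_shape sh; lia.
by apply: reachable_xblock; case_shape sh; solve_shape.
Qed.

Lemma reachable_Dword_inv n w : 0 < n -> reachable n.+1 w ->
  exists a c d, shape n a c d /\ w \in Dword_words (xblock a c d).
Proof.
move=> n_gt0 [[-> odd_n1] | [a [c [d [sh ->]]]]].
  exists 0, 1, 0; split; first by solve_shape.
  by apply/mem_Dword_xblock; left; exists 0 => //; left.
case_shape sh.
- exists (n - 1), 1, n; split; first by solve_shape.
  by apply/mem_Dword_xblock; left; exists 0; [lia | right; congr xblock; lia].
- have [c_small | c_n] : c + 2 <= n \/ c = n by lia.
  + exists 0, c.+1, 0; split; first by solve_shape.
    apply/mem_Dword_xblock; left; exists c => //; left.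
    by rewrite subnn xblock0; congr xblock; lia.
  + exists 0, n, 1; split; first by solve_shape.
    by apply/mem_Dword_xblock; right; exists 0; [lia | left; congr xblock; lia].
- exists 0, n, 1; split; first by solve_shape.
  by apply/mem_Dword_xblock; right; exists 0; [lia | right; congr xblock; lia].
have : (c + d <= n /\ a.+2 <= n) \/ (c + d + 2 <= n /\ a.+2 = n.+1) \/ (c + d = n /\ a.+2 = n.+1)
       \/ (c + d = n.+2 /\ 2 <= c) \/ (c + d = n.+2 /\ c = 1) by lia.
case=> [[small_cd a_n] | [[small_cd a_n] | [[cd_n a_n] | [[cd_n c_ge2] | [cd_n c1]]]]].
- exists a, c, d.+1; split; first by solve_shape.
  by apply/mem_Dword_xblock; right; exists d; [lia | left; congr xblock; lia].
- exists a.-1, c.+1, d; split; first by solve_shape.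
  by apply/mem_Dword_xblock; left; exists 0; [lia | left; congr xblock; lia].
- exists (n - 1), 1, n; split; first by solve_shape.
  by apply/mem_Dword_xblock; right; exists d; [lia | left; congr xblock; lia].
- have [a_small | a_n] : a.+2 <= n \/ a.+2 = n.+1 by lia.
  + exists a, c.-1, d; split; first by solve_shape.
    by apply/mem_Dword_xblock; right; exists d.-1; [lia | right; congr xblock; lia].
  + exists (n - 1), 1, n; split; first by solve_shape.
    by apply/mem_Dword_xblock; right; exists d.-1; [lia | right; congr xblock; lia].
- have [a_ge2 | a1] : 2 <= a \/ a = 1 by lia.
  + exists a.-1, 1, n; split; first by solve_shape.
    by apply/mem_Dword_xblock; left; exists 0; [lia | right; congr xblock; lia].
  + exists 0, n, 1; split; first by solve_shape.
    by apply/mem_Dword_xblock; left; exists n.-1; [lia | right; congr xblock; lia].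
Qed.

Definition Dpow_words (n : nat) : seq word := iter n Dwords [:: [:: (false, 0)]].

Lemma mem_Dpow_words n w : 0 < n -> w \in Dpow_words n <-> reachable n w.
Proof.
elim: n w => [//|[|n] IHn] w _.
  rewrite (_ : Dpow_words 1 = [:: [::]; xblock 0 1 1]) // !inE; split.
  - by case/orP => /eqP ->; [left | apply: reachable_xblock].
  - case=> [[-> _] | [a [c [d [sh ->]]]]]; first by [].
    by rewrite (_ : a = 0) 1?(_ : c = 1) 1?(_ : d = 1) ?eqxx ?orbT //; case_shape sh; lia.
split=> [/flatten_mapP [v /IHn v_reach w_v] | /reachable_Dword_inv [//|a [c [d [sh w_D]]]]].
- case: v_reach w_v => // [[-> //] | [a [c [d [sh ->]]]]]; exact: reachable_Dword.
- by apply/flatten_mapP; exists (xblock a c d) => //; apply/IHn/reachable_xblock.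
Qed.

Lemma sumn_double_iota k b : sumn [seq i.*2 + b.+1 | i <- iota 0 k] = k * (k + b).
Proof.
elim: k => [|k IHk] //; rewrite -[k.+1]addn1 iotaD map_cat sumn_cat IHk /=; lia.
Qed.

Definition lengths (n : nat) : seq nat := [seq i.*2 + (odd n).+1 | i <- iota 0 n./2].

Lemma mem_lengths n L : (L \in lengths n) = (0 < L < n) && odd (L + n).
Proof.
apply/mapP/idP => [[i] | L_n]; first by rewrite mem_iota => i_n ->; lia.
by exists (L - (odd n).+1)./2; [rewrite mem_iota | ]; lia.
Qed.

Lemma uniq_lengths n : uniq (lengths n).
Proof. by rewrite map_inj_uniq ?iota_uniq // => i j; lia. Qed.

Lemma sumn_lengths n : sumn (lengths n) = n./2 * (n./2 + odd n).
Proof. exact: sumn_double_iota. Qed.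

Definition level_pairs (n : nat) : seq (nat * nat) :=
  [seq (c, L - c) | L <- lengths n, c <- iota 1 L] ++ [seq (c, n.+1 - c) | c <- iota 1 n].

Lemma mem_level_pairs n c d : ((c, d) \in level_pairs n) =
  (0 < c) && ((c + d < n) && odd (c + d + n) || (c + d == n.+1) && (0 < d)).
Proof.
rewrite mem_cat; apply/orP/idP.
- case=> [/allpairsPdep [L [c' [+ + [-> ->]]]] | /mapP [c' + [-> ->]]];
    rewrite ?mem_lengths !mem_iota; lia.
- move=> cd_n; have [small | large] := boolP (c + d < n); [left | right].
  + apply/allpairsPdep; exists (c + d), c; rewrite mem_lengths mem_iota.
    by split; [lia | lia | congr pair; lia].
  + by apply/mapP; exists c; [rewrite mem_iota | congr pair]; lia.
Qed.

Lemma uniq_level_pairs n : uniq (level_pairs n).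
Proof.
rewrite cat_uniq; apply/and3P; split.
- apply: allpairs_uniq_dep => [|L _|]; rewrite ?uniq_lengths ?iota_uniq //.
  move=> _ _ /allpairsPdep [L [c [_ + ->]]] /allpairsPdep [L' [c' [_ + ->]]] /= [ec eL].
  rewrite !mem_iota => cL c'L'; subst c'; have eLL : L = L' by lia.
  by subst L'.
- apply/hasPn => _ /mapP [c + ->]; rewrite mem_iota => c_n.
  by apply/negP => /allpairsPdep [L [c' [+ + [ec ed]]]]; rewrite mem_lengths mem_iota; lia.
- by rewrite map_inj_uniq ?iota_uniq // => c c' [].
Qed.

Lemma size_level_pairs n : size (level_pairs n) = sumn (lengths n) + n.
Proof.
rewrite size_cat size_allpairs_dep size_map size_iota; congr (sumn _ + _).
by rewrite -[RHS]map_id; apply: eq_map => L; rewrite size_iota.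
Qed.

Definition shape_triples (n : nat) : seq (nat * nat * nat) :=
  [:: (n.-1, 1, n); (0, n, 1)] ++ [seq (0, c, 0) | c <- lengths n]
  ++ [seq (a, p.1, p.2) | a <- iota 1 (n - 2), p <- level_pairs n].

Lemma mem_shape_triples n a c d : 2 < n -> ((a, c, d) \in shape_triples n) = shape n a c d.
Proof.
move=> n_gt2; rewrite /shape !mem_cat !inE !xpair_eqE.
have -> : ((a, c, d) \in [seq (0, c, 0) | c <- lengths n]) = [&& a == 0, d == 0 & c \in lengths n].
  by apply/mapP/and3P => [[c' + [-> -> ->]] | [/eqP -> /eqP -> c_n]]; [| exists c].
have -> : ((a, c, d) \in [seq (a, p.1, p.2) | a <- iota 1 (n - 2), p <- level_pairs n]) =
          (a \in iota 1 (n - 2)) && ((c, d) \in level_pairs n).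
  apply/allpairsP/andP => [[[a' [c' d']] /= [+ + [-> -> ->]]] | [a_n cd_n]] //.
  by exists (a, (c, d)).
rewrite mem_lengths mem_level_pairs mem_iota; lia.
Qed.

Lemma uniq_shape_triples n : 2 < n -> uniq (shape_triples n).
Proof.
move=> n_gt2; set B := [seq (0, c, 0) | c <- lengths n].
set U := [seq (a, p.1, p.2) | a <- iota 1 (n - 2), p <- level_pairs n].
have memB t : t \in B -> (t.1.1 == 0) && (t.2 == 0) by case/mapP => c _ ->.
have memU t : t \in U -> 0 < t.1.1 < n.-1.
  by case/allpairsP => -[a p] /= [+ _ ->]; rewrite mem_iota /=; lia.
rewrite cat_uniq [uniq (B ++ U)]cat_uniq has_cat negb_or; apply/and5P; split.
- by rewrite /= inE andbT; apply/eqP => -[]; lia.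
- by apply/andP; split; apply/hasPn => -[[a c] d]; [move/memB | move/memU] => /=;
    rewrite !inE !xpair_eqE; lia.
- by rewrite map_inj_uniq ?uniq_lengths // => c c' [].
- by apply/hasPn => -[[a c] d] /memU /= a_n; apply/negP => /memB /=; lia.
- apply: allpairs_uniq; rewrite ?iota_uniq ?uniq_level_pairs //.
  by move=> [a [c d]] [a' [c' d']] _ _ [-> -> ->].
Qed.

Lemma size_shape_triples n :
  size (shape_triples n) = 2 + n./2 + (n - 2) * (n./2 * (n./2 + odd n) + n).
Proof.
by rewrite !size_cat size_map size_allpairs size_iota size_level_pairs sumn_lengths size_map size_iota.
Qed.

Lemma size_undup_Dpow_words n :
  2 < n -> size (undup (Dpow_words n)) = odd n + size (shape_triples n).
Proof.
move=> n_gt2; set blocks := [seq xblock t.1.1 t.1.2 t.2 | t <- shape_triples n].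
have mem_blocks w : w \in blocks <-> exists a c d, shape n a c d /\ w = xblock a c d.
  split=> [/mapP [[[a c] d] + ->] | [a [c [d [sh ->]]]]]; first by rewrite mem_shape_triples //; exists a, c, d.
  by apply/mapP; exists (a, c, d); rewrite ?mem_shape_triples.
have uniq_blocks : uniq blocks.
  rewrite map_inj_in_uniq ?uniq_shape_triples // => -[[a c] d] [[a' c'] d'].
  rewrite !mem_shape_triples // => /andP [c_gt0 _] /andP [c'_gt0 _] /= /xblock_inj.
  by case/(_ c_gt0 c'_gt0) => -> -> ->.
have -> : odd n + size (shape_triples n) = size (nseq (odd n) [::] ++ blocks).
  by rewrite size_cat size_nseq size_map.
apply/perm_size/uniq_perm; rewrite ?undup_uniq //.
- rewrite cat_uniq uniq_blocks andbT; apply/andP; split; first by case: odd.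
  apply/hasPn => _ /mem_blocks [a [c [d [/andP [c_gt0 _] ->]]]].
  by rewrite mem_nseq; case: c c_gt0 => // c _; rewrite andbF.
- move=> w; rewrite mem_undup mem_cat mem_nseq; apply/idP/idP.
  + move=> /(mem_Dpow_words w (ltnW (ltnW n_gt2))) [[-> ->] | /mem_blocks ->]; rewrite ?eqxx ?orbT //.
  + case/orP=> [/andP [odd_n /eqP ->] | /mem_blocks w_blk]; apply/mem_Dpow_words; try lia.
    * by left; split=> //; case: odd odd_n.
    * by right.
Qed.

Lemma Omega_Dpow_x0 (K : comNzRingType) n :
  (forall m : nat, (m.+1%:R != 0 :> K)%R) -> 2 < n ->
  Omega (Dpow n (x0 K)) = odd n + 2 + n./2 + (n - 2) * (n./2 * (n./2 + odd n) + n).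
Proof.
move=> charK0 n_gt2; rewrite Omega_coefs_one_at1 //; last first.
  by apply: Dpow_coefs_one_at1; rewrite /coefs_one_at1 /= hornerC eqxx.
by rewrite map_fst_Dpow size_undup_Dpow_words // size_shape_triples !addnA.
Qed.

Theorem proposition3p9 (K : comNzRingType)
  (charK0 : forall m : nat, ((m.+1)%:R != 0 :> K)%R) (n k : nat) :
  (3 <= n)%N ->
  (n = k.*2.+1 -> Omega (Dpow n (x0 K)) = 2 * k ^ 3 + 5 * k ^ 2 + 2)%N /\
  (n = k.*2 -> Omega (Dpow n (x0 K)) = (k + 2) * (2 * k ^ 2 - 2 * k + 1))%N.
Proof.
move=> n_ge3; rewrite (Omega_Dpow_x0 charK0 n_ge3).
split=> n_k; subst n; rewrite /= ?odd_double ?uphalf_double ?doubleK /=.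
- by case: k n_ge3 => [|k] // _; rewrite !expnS expn0 !muln1; nia.
- by case: k n_ge3 => [|[|k]] // _; rewrite !expnS expn0 !muln1; nia.
Qed.
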